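(* Let $P$ be a field and $W=W(X)$ the free commutative, free associative, or free Lie algebra over $P$ on a finite set $X$. Let $u\in W$ be a basic element, i.e. an element belonging to some free generating set (base) of $W$. Then $$\bigcap_{\eta\in\mathrm{End}(W),\ \eta(u)=0}\mathrm{Ker}\,\eta=\langle u\rangle,$$ where $\langle u\rangle$ is the ideal of $W$ generated by $u$.
   Context: $\mathrm{End}(W)$ denotes the set of all algebra endomorphisms of $W$. In the paper's notation this is the statement $\langle u\rangle''=\langle u\rangle$ for the Galois correspondence $T'=\{\eta\in\mathrm{End}(W): T\subset\mathrm{Ker}\,\eta\}$, $A'=\bigcap_{\eta\in A}\mathrm{Ker}\,\eta$. *)

From HB Require Import structures.
From mathcomp Require Import all_boot all_order all_algebra.
From mathcomp Require Import mpoly.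


Import GRing.Theory.
Local Open Scope ring_scope.

(* Generic framework: an algebra W presented as a subset of an ambient type  *)
(* A carrying explicit operations.                                           *)

Record ualg_sig (P : fieldType) := UAlgSig {
  ua_car   : Type;
  ua_zero  : ua_car;
  ua_one   : ua_car;
  ua_add   : ua_car -> ua_car -> ua_car;
  ua_scale : P -> ua_car -> ua_car;
  ua_mul   : ua_car -> ua_car -> ua_car;
  ua_W     : ua_car -> Prop
}.

Record lie_sig (P : fieldType) := LieSig {
  la_car   : Type;
  la_zero  : la_car;
  la_add   : la_car -> la_car -> la_car;
  la_scale : P -> la_car -> la_car;
  la_br    : la_car -> la_car -> la_car;
  la_W     : la_car -> Prop
}.

Arguments ua_car {P} u.
Arguments la_car {P} l.
Arguments ua_zero {P} u.
Arguments ua_one {P} u.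
Arguments ua_add {P} u _ _.
Arguments ua_scale {P} u _ _.
Arguments ua_mul {P} u _ _.
Arguments ua_W {P} u _.
Arguments la_zero {P} l.
Arguments la_add {P} l _ _.
Arguments la_scale {P} l _ _.
Arguments la_br {P} l _ _.
Arguments la_W {P} l _.

Set Implicit Arguments.
Unset Strict Implicit.
Unset Printing Implicit Defensive.

Section UAlg.
Variables (P : fieldType) (W : ualg_sig P).
Local Notation A := (ua_car W).
Local Notation inW := (ua_W W).

Inductive ua_subalg_gen (S : A -> Prop) : A -> Prop :=
  | uasg_gen a : S a -> ua_subalg_gen S a
  | uasg_zero : ua_subalg_gen S (ua_zero W)
  | uasg_one : ua_subalg_gen S (ua_one W)
  | uasg_add a b : ua_subalg_gen S a -> ua_subalg_gen S b ->
                   ua_subalg_gen S (ua_add W a b)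
  | uasg_scale c a : ua_subalg_gen S a -> ua_subalg_gen S (ua_scale W c a)
  | uasg_mul a b : ua_subalg_gen S a -> ua_subalg_gen S b ->
                   ua_subalg_gen S (ua_mul W a b).

Inductive ua_ideal_gen (u : A) : A -> Prop :=
  | uaig_gen : ua_ideal_gen u u
  | uaig_zero : ua_ideal_gen u (ua_zero W)
  | uaig_add a b : ua_ideal_gen u a -> ua_ideal_gen u b ->
                   ua_ideal_gen u (ua_add W a b)
  | uaig_scale c a : ua_ideal_gen u a -> ua_ideal_gen u (ua_scale W c a)
  | uaig_mull w a : inW w -> ua_ideal_gen u a -> ua_ideal_gen u (ua_mul W w a)
  | uaig_mulr a w : inW w -> ua_ideal_gen u a -> ua_ideal_gen u (ua_mul W a w).

(* algebra endomorphisms of W (only their values on W matter) *)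
Definition ua_endo (eta : A -> A) : Prop :=
  [/\ forall a, inW a -> inW (eta a),
      eta (ua_one W) = ua_one W,
      forall a b, inW a -> inW b -> eta (ua_add W a b) = ua_add W (eta a) (eta b),
      forall c a, inW a -> eta (ua_scale W c a) = ua_scale W c (eta a) &
      forall a b, inW a -> inW b -> eta (ua_mul W a b) = ua_mul W (eta a) (eta b)].

Definition ua_hom_to (B : algType P) (h : A -> B) : Prop :=
  [/\ h (ua_one W) = 1,
      forall a b, inW a -> inW b -> h (ua_add W a b) = h a + h b,
      forall c a, inW a -> h (ua_scale W c a) = c *: h a &
      forall a b, inW a -> inW b -> h (ua_mul W a b) = h a * h b].

Definition ua_base_assoc (S : A -> Prop) : Prop :=
  [/\ forall s, S s -> inW s,
      forall a, inW a <-> ua_subalg_gen S a &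
      forall (B : algType P) (g : A -> B),
        exists h, ua_hom_to h /\ forall s, S s -> h s = g s].

Definition ua_base_comm (S : A -> Prop) : Prop :=
  [/\ forall s, S s -> inW s,
      forall a, inW a <-> ua_subalg_gen S a &
      forall (B : comAlgType P) (g : A -> B),
        exists h, @ua_hom_to B h /\ forall s, S s -> h s = g s].

End UAlg.

Definition is_lie_bracket (P : fieldType) (V : lmodType P) (br : V -> V -> V) :=
  [/\ forall c x y z, br (c *: x + y) z = c *: br x z + br y z,
      forall c x y z, br x (c *: y + z) = c *: br x y + br x z,
      forall x, br x x = 0 &
      forall x y z, br x (br y z) + br y (br z x) + br z (br x y) = 0].

Section Lie.
Variables (P : fieldType) (L : lie_sig P).
Local Notation A := (la_car L).
Local Notation inW := (la_W L).

Inductive la_subalg_gen (S : A -> Prop) : A -> Prop :=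
  | lasg_gen a : S a -> la_subalg_gen S a
  | lasg_zero : la_subalg_gen S (la_zero L)
  | lasg_add a b : la_subalg_gen S a -> la_subalg_gen S b ->
                   la_subalg_gen S (la_add L a b)
  | lasg_scale c a : la_subalg_gen S a -> la_subalg_gen S (la_scale L c a)
  | lasg_br a b : la_subalg_gen S a -> la_subalg_gen S b ->
                  la_subalg_gen S (la_br L a b).

Inductive la_ideal_gen (u : A) : A -> Prop :=
  | laig_gen : la_ideal_gen u u
  | laig_zero : la_ideal_gen u (la_zero L)
  | laig_add a b : la_ideal_gen u a -> la_ideal_gen u b ->
                   la_ideal_gen u (la_add L a b)
  | laig_scale c a : la_ideal_gen u a -> la_ideal_gen u (la_scale L c a)
  | laig_br w a : inW w -> la_ideal_gen u a -> la_ideal_gen u (la_br L w a).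

Definition la_endo (eta : A -> A) : Prop :=
  [/\ forall a, inW a -> inW (eta a),
      forall a b, inW a -> inW b -> eta (la_add L a b) = la_add L (eta a) (eta b),
      forall c a, inW a -> eta (la_scale L c a) = la_scale L c (eta a) &
      forall a b, inW a -> inW b -> eta (la_br L a b) = la_br L (eta a) (eta b)].

Definition la_hom_to (V : lmodType P) (br : V -> V -> V) (h : A -> V) : Prop :=
  [/\ forall a b, inW a -> inW b -> h (la_add L a b) = h a + h b,
      forall c a, inW a -> h (la_scale L c a) = c *: h a &
      forall a b, inW a -> inW b -> h (la_br L a b) = br (h a) (h b)].

Definition la_base (S : A -> Prop) : Prop :=
  [/\ forall s, S s -> inW s,
      forall a, inW a <-> la_subalg_gen S a &
      forall (V : lmodType P) (br : V -> V -> V), is_lie_bracket br ->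
        forall g : A -> V,
        exists h, la_hom_to br h /\ forall s, S s -> h s = g s].

End Lie.

(* free commutative (unital) algebra = polynomial algebra P[x_0..x_{n-1}] *)
Definition free_comm_alg (P : fieldType) (n : nat) : ualg_sig P :=
  @UAlgSig P {mpoly P[n]} 0 1 +%R (fun c p => c *: p) *%R (fun _ => True).

(* Ambient space of noncommutative formal power series: functions from      *)
(* words over 'I_n to P, with the Cauchy (concatenation) product.           *)
Definition ncps (P : fieldType) (n : nat) := seq 'I_n -> P.

Section NCPS.
Variables (P : fieldType) (n : nat).
Definition ncps_zero : ncps P n := fun _ => 0.
Definition ncps_one : ncps P n := fun w => (w == [::])%:R.
Definition ncps_add (f g : ncps P n) : ncps P n := fun w => f w + g w.
Definition ncps_scale (c : P) (f : ncps P n) : ncps P n := fun w => c * f w.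
Definition ncps_mul (f g : ncps P n) : ncps P n :=
  fun w => \sum_(i < (size w).+1) f (take i w) * g (drop i w).
Definition ncps_var (x : 'I_n) : ncps P n := fun w => (w == [:: x])%:R.
Definition ncps_comm (f g : ncps P n) : ncps P n :=
  ncps_add (ncps_mul f g) (ncps_scale (-1) (ncps_mul g f)).
Definition ncps_vars (a : ncps P n) : Prop := exists x, a = ncps_var x.
End NCPS.

(* free associative (unital) algebra P<x_0..x_{n-1}>: the unital subalgebra *)
(* of noncommutative power series generated by the variables                *)
Definition free_assoc_alg (P : fieldType) (n : nat) : ualg_sig P :=
  let S0 := @UAlgSig P (ncps P n) (@ncps_zero P n) (@ncps_one P n)
              (@ncps_add P n) (@ncps_scale P n) (@ncps_mul P n) (fun _ => True) in
  @UAlgSig P (ncps P n) (@ncps_zero P n) (@ncps_one P n)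
     (@ncps_add P n) (@ncps_scale P n) (@ncps_mul P n)
     (@ua_subalg_gen P S0 (@ncps_vars P n)).

(* free Lie algebra on x_0..x_{n-1}: the Lie subalgebra of P<<X>> (bracket  *)
(* = commutator) generated by the variables                                  *)
Definition free_lie_alg (P : fieldType) (n : nat) : lie_sig P :=
  let L0 := @LieSig P (ncps P n) (@ncps_zero P n) (@ncps_add P n)
              (@ncps_scale P n) (@ncps_comm P n) (fun _ => True) in
  @LieSig P (ncps P n) (@ncps_zero P n) (@ncps_add P n)
     (@ncps_scale P n) (@ncps_comm P n)
     (@la_subalg_gen P L0 (@ncps_vars P n)).

From HB Require Import structures.
From mathcomp Require Import all_boot all_order all_algebra.
From mathcomp Require Import mpoly.
From mathcomp Require Import boolp functions.

(* Let S be a base of W containing u. By freeness, the map sending u to 0 and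
   fixing S \ {u} extends to an endomorphism h of W. Induction along the
   generation of W from S shows a - h a \in <u> for every a in W, so an element
   killed by every endomorphism killing u -- in particular by h -- lies in <u>.
   Conversely every endomorphism killing u kills the ideal <u>.
   To apply freeness with target W itself, the ambient space of noncommutative
   power series must first be equipped with its algebra structure (Cauchy
   product); the commutator then makes it a Lie algebra. *)

Set Implicit Arguments.
Unset Strict Implicit.
Unset Printing Implicit Defensive.

Import GRing.Theory.
Local Open Scope ring_scope.

Lemma exchange_big_triangle (R : nmodType) (N : nat) (F : nat -> nat -> R) :
  \sum_(0 <= i < N) \sum_(0 <= j < i.+1) F j i =
  \sum_(0 <= j < N) \sum_(j <= i < N) F j i.
Proof.
transitivity (\sum_(0 <= i < N) \sum_(0 <= j < N | (j <= i)%N) F j i).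
  apply: eq_big_nat => i /andP[_ ltiN].
  by rewrite (big_nat_widen _ _ _ _ _ ltiN).
rewrite (exchange_big_dep_nat predT) //; apply: eq_big_nat => j _.
by rewrite [RHS](@big_nat_widenl _ _ _ j 0).
Qed.

HB.instance Definition _ (P : fieldType) (n : nat) :=
  GRing.Zmodule.copy (ncps P n) (seq 'I_n -> P).
HB.instance Definition _ (P : fieldType) (n : nat) :=
  GRing.Lmodule.copy (ncps P n) (seq 'I_n -> P^o).

Section NcpsRing.
Variables (P : fieldType) (n : nat).
Implicit Types f g h : ncps P n.

Lemma ncps_mulA : associative (@ncps_mul P n).
Proof.
move=> f g h; apply/funext => w; rewrite /ncps_mul.
set N := size w.
pose F j i := f (take j w) * g (drop j (take i w)) * h (drop i w).
transitivity (\sum_(0 <= j < N.+1) \sum_(j <= i < N.+1) F j i).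
  rewrite big_mkord; apply: eq_bigr => j _.
  rewrite mulr_sumr size_drop; symmetry.
  rewrite -{1}(add0n j) big_addn (subSn (ltn_ord j : (j <= N)%N)) big_mkord.
  by apply: eq_bigr => k _; rewrite /F take_drop drop_drop mulrA.
rewrite -exchange_big_triangle big_mkord; apply: eq_bigr => i _.
rewrite mulr_suml (size_takel (ltn_ord i : (i <= N)%N)) big_mkord.
by apply: eq_bigr => j _; rewrite take_takel // -ltnS.
Qed.

Lemma ncps_mul1r : left_id (@ncps_one P n) (@ncps_mul P n).
Proof.
move=> f; apply/funext => w.
rewrite /ncps_mul big_ord_recl take0 drop0 /ncps_one eqxx mul1r.
by rewrite big1 ?addr0 // => i _; rewrite -size_eq0 size_takel /= ?mul0r.
Qed.

Lemma ncps_mulr1 : right_id (@ncps_one P n) (@ncps_mul P n).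
Proof.
move=> f; apply/funext => w; rewrite /ncps_mul big_ord_recr /=.
rewrite drop_size take_size /ncps_one eqxx mulr1 big1 ?add0r // => i _.
by rewrite -size_eq0 size_drop subn_eq0 leqNgt ltn_ord mulr0.
Qed.

Lemma ncps_mulDl : left_distributive (@ncps_mul P n) (@ncps_add P n).
Proof.
move=> f g h; apply/funext => w; rewrite /ncps_mul /ncps_add -big_split.
by apply: eq_bigr => i _; rewrite mulrDl.
Qed.

Lemma ncps_mulDr : right_distributive (@ncps_mul P n) (@ncps_add P n).
Proof.
move=> f g h; apply/funext => w; rewrite /ncps_mul /ncps_add -big_split.
by apply: eq_bigr => i _; rewrite mulrDr.
Qed.

Lemma ncps_one_neq0 : @ncps_one P n != 0.
Proof. by apply/eqP => /(congr1 (@^~ [::])) /eqP; rewrite /ncps_one oner_eq0. Qed.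

End NcpsRing.

HB.instance Definition _ (P : fieldType) (n : nat) :=
  GRing.Zmodule_isNzRing.Build (ncps P n) (@ncps_mulA P n) (@ncps_mul1r P n)
    (@ncps_mulr1 P n) (@ncps_mulDl P n) (@ncps_mulDr P n) (@ncps_one_neq0 P n).

Section NcpsAlgebra.
Variables (P : fieldType) (n : nat).
Implicit Types f g : ncps P n.

Lemma ncps_scalerAl (c : P) f g :
  ncps_scale c (ncps_mul f g) = ncps_mul (ncps_scale c f) g.
Proof.
apply/funext => w; rewrite /ncps_scale /ncps_mul mulr_sumr.
by apply: eq_bigr => i _; rewrite mulrA.
Qed.

Lemma ncps_scalerAr (c : P) f g :
  ncps_scale c (ncps_mul f g) = ncps_mul f (ncps_scale c g).
Proof.
apply/funext => w; rewrite /ncps_scale /ncps_mul mulr_sumr.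
by apply: eq_bigr => i _; rewrite mulrCA.
Qed.

End NcpsAlgebra.

HB.instance Definition _ (P : fieldType) (n : nat) :=
  GRing.Lmodule_isLalgebra.Build P (ncps P n) (@ncps_scalerAl P n).
HB.instance Definition _ (P : fieldType) (n : nat) :=
  GRing.Lalgebra_isAlgebra.Build P (ncps P n) (@ncps_scalerAr P n).

Section LieBracket.
Variables (P : fieldType) (V : lmodType P) (br : V -> V -> V).
Hypothesis br_lie : is_lie_bracket br.

Lemma lie_brDl x y z : br (x + y) z = br x z + br y z.
Proof. by case: br_lie => linl _ _ _; have := linl 1 x y z; rewrite !scale1r. Qed.

Lemma lie_brDr x y z : br x (y + z) = br x y + br x z.
Proof. by case: br_lie => _ linr _ _; have := linr 1 x y z; rewrite !scale1r. Qed.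

Lemma lie_brr0 x : br x 0 = 0.
Proof. by apply: (addrI (br x 0)); rewrite -lie_brDr !addr0. Qed.

Lemma lie_brBr x y z : br x (y - z) = br x y - br x z.
Proof.
case: br_lie => _ linr _ _; have := linr (-1) x z y.
by rewrite !scaleN1r addrC [RHS]addrC => <-.
Qed.

Lemma lie_brC x y : br x y = - br y x.
Proof.
case: br_lie => _ _ alt _; apply/eqP; rewrite -addr_eq0.
by have := alt (x + y); rewrite lie_brDl !lie_brDr !alt add0r addr0 => ->.
Qed.

End LieBracket.

Lemma commr_lie_bracket (P : fieldType) (R : algType P) :
  is_lie_bracket (fun x y : R => x * y - y * x).
Proof.
split.
- move=> c x y z; rewrite mulrDl mulrDr -scalerAl -scalerAr scalerBr.
  by rewrite opprD addrACA.
- move=> c x y z; rewrite mulrDl mulrDr -scalerAl -scalerAr scalerBr.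
  by rewrite opprD addrACA.
- by move=> x; rewrite subrr.
- move=> x y z; rewrite !mulrBr !mulrBl !mulrA.
  move: (x * y * z) (x * z * y) (y * z * x) (z * y * x) (y * x * z) (z * x * y).
  move=> A B C D E F; rewrite !opprB !addrA !subrK (addrAC _ (- E) B).
  by rewrite (addrAC _ D B) subrK (addrAC _ (- E) (- D)) addrK subrK subrr.
Qed.

Lemma ncps_comm_lie (P : fieldType) (n : nat) : is_lie_bracket (@ncps_comm P n).
Proof.
have -> : @ncps_comm P n = fun f g => f * g - g * f.
  apply/funext => f; apply/funext => g.
  by change (f * g + (-1) *: (g * f) = f * g - g * f); rewrite scaleN1r.
exact: commr_lie_bracket.
Qed.

Local Notation ua_sig_of inW :=
  (@UAlgSig _ _ 0 1 +%R (fun c p => c *: p) *%R inW).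
Local Notation la_sig_of br inW :=
  (@LieSig _ _ 0 +%R (fun c p => c *: p) br inW).

Section UnitalSubalgebra.
Variables (P : fieldType) (B : algType P) (inW : B -> Prop).
Local Notation W := (ua_sig_of inW).
Variable S : B -> Prop.
Hypothesis genW : forall a, inW a <-> ua_subalg_gen (W:=W) S a.

Let inW0 : inW 0. Proof. exact/genW/uasg_zero. Qed.
Let inW1 : inW 1. Proof. exact/genW/uasg_one. Qed.
Let inWD a b : inW a -> inW b -> inW (a + b).
Proof. by move=> /genW Wa /genW Wb; apply/genW/uasg_add. Qed.
Let inWZ c a : inW a -> inW (c *: a).
Proof. by move=> /genW Wa; apply/genW/uasg_scale. Qed.
Let inWM a b : inW a -> inW b -> inW (a * b).
Proof. by move=> /genW Wa /genW Wb; apply/genW/uasg_mul. Qed.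

Lemma ua_hom_to0 (h : B -> B) : ua_hom_to (W:=W) h -> h 0 = 0.
Proof. by case=> _ _ hZ _; have := hZ 0 0 inW0; rewrite /= !scale0r. Qed.

Lemma ua_endo_hom (eta : B -> B) : ua_endo (W:=W) eta -> ua_hom_to (W:=W) eta.
Proof. by case. Qed.

Lemma ua_ideal_genB (u a b : B) : ua_ideal_gen (W:=W) u a ->
  ua_ideal_gen (W:=W) u b -> ua_ideal_gen (W:=W) u (a - b).
Proof. by move=> Ia Ib; rewrite -scaleN1r; apply/uaig_add/uaig_scale. Qed.

Lemma ua_ideal_gen_ker (u v : B) : inW u -> ua_ideal_gen (W:=W) u v ->
  inW v /\ forall eta, ua_endo (W:=W) eta -> eta u = 0 -> eta v = 0.
Proof.
move=> Wu; elim=> {v} [|||c a _ [Wa ka]|w a Ww _ [Wa ka]|a w Ww _ [Wa ka]].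
- by split=> // eta _.
- by split=> // eta /ua_endo_hom/ua_hom_to0.
- move=> a b _ [Wa ka] _ [Wb kb]; split=> [|eta E eu]; first exact: inWD.
  by have [_ _ eD _ _] := E; rewrite /= eD // ka // kb //= addr0.
- split=> [|eta E eu]; first exact: inWZ.
  by have [_ _ _ eZ _] := E; rewrite /= eZ // ka //= scaler0.
- split=> [|eta E eu]; first exact: inWM.
  by have [_ _ _ _ eM] := E; rewrite /= eM // ka //= mulr0.
- split=> [|eta E eu]; first exact: inWM.
  by have [_ _ _ _ eM] := E; rewrite /= eM // ka //= mul0r.
Qed.

Section SubstituteZero.
Variables (u : B) (h : B -> B).
Hypotheses (SW : forall s, S s -> inW s) (h_hom : ua_hom_to (W:=W) h).
Hypothesis hS : forall s, S s -> h s = if s == u then 0 else s.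

Lemma ua_subst0_endo : ua_endo (W:=W) h.
Proof.
have [h1 hD hZ hM] := h_hom; split=> // a /genW; elim=> {a} [s Ss|||a b|c a|a b].
- by rewrite hS //; case: eqP => _; [exact: inW0 | exact: SW].
- by rewrite (ua_hom_to0 h_hom).
- by rewrite h1.
- by move=> /genW Wa ha /genW Wb hb; rewrite /= hD //; exact: inWD.
- by move=> /genW Wa ha; rewrite /= hZ //; exact: inWZ.
- by move=> /genW Wa ha /genW Wb hb; rewrite /= hM //; exact: inWM.
Qed.

Lemma ua_sub_subst0_ideal a : inW a -> ua_ideal_gen (W:=W) u (a - h a).
Proof.
have [h1 hD hZ hM] := h_hom; move=> /genW; elim=> {a} [s Ss|||a b|c a|a b].
- rewrite hS //; case: eqP => [->|_]; last by rewrite subrr; exact: uaig_zero.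
  by rewrite subr0; exact: uaig_gen.
- by rewrite (ua_hom_to0 h_hom) subrr; exact: uaig_zero.
- by rewrite h1 subrr; exact: uaig_zero.
- move=> /genW Wa Ia /genW Wb Ib; rewrite /= hD // opprD addrACA.
  exact: uaig_add.
- by move=> /genW Wa Ia; rewrite /= hZ // -scalerBr; exact: uaig_scale.
- move=> /genW Wa Ia /genW Wb Ib; rewrite /= hM //.
  have -> : a * b - h a * h b = (a - h a) * b + h a * (b - h b).
    by rewrite mulrBl mulrBr addrA subrK.
  apply: uaig_add; first exact: uaig_mulr.
  by apply: uaig_mull => //; case: ua_subst0_endo => /(_ a Wa).
Qed.

End SubstituteZero.

Lemma ua_killing_kers_eq_ideal (u : B) (h : B -> B) :
    (forall s, S s -> inW s) -> S u -> ua_hom_to (W:=W) h ->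
    (forall s, S s -> h s = if s == u then 0 else s) ->
  forall v, (inW v /\ forall eta, ua_endo (W:=W) eta -> eta u = 0 -> eta v = 0)
            <-> ua_ideal_gen (W:=W) u v.
Proof.
move=> SW Su h_hom hS v; split; last exact/ua_ideal_gen_ker/SW.
move=> [Wv ker_v]; have hu : h u = 0 by rewrite hS // eqxx.
have := ua_sub_subst0_ideal SW h_hom hS Wv.
by rewrite (ker_v h (ua_subst0_endo SW h_hom hS) hu) subr0.
Qed.

End UnitalSubalgebra.

Section LieSubalgebra.
Variables (P : fieldType) (V : lmodType P) (br : V -> V -> V) (inW : V -> Prop).
Hypothesis br_lie : is_lie_bracket br.
Local Notation L := (la_sig_of br inW).
Variable S : V -> Prop.
Hypothesis genW : forall a, inW a <-> la_subalg_gen (L:=L) S a.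

Let inW0 : inW 0. Proof. exact/genW/lasg_zero. Qed.
Let inWD a b : inW a -> inW b -> inW (a + b).
Proof. by move=> /genW Wa /genW Wb; apply/genW/lasg_add. Qed.
Let inWZ c a : inW a -> inW (c *: a).
Proof. by move=> /genW Wa; apply/genW/lasg_scale. Qed.
Let inWbr a b : inW a -> inW b -> inW (br a b).
Proof. by move=> /genW Wa /genW Wb; apply/genW/lasg_br. Qed.

Lemma la_hom_to0 (h : V -> V) : la_hom_to (L:=L) br h -> h 0 = 0.
Proof. by case=> _ hZ _; have := hZ 0 0 inW0; rewrite /= !scale0r. Qed.

Lemma la_endo_hom (eta : V -> V) :
  la_endo (L:=L) eta -> la_hom_to (L:=L) br eta.
Proof. by case. Qed.

Lemma la_ideal_genB (u a b : V) : la_ideal_gen (L:=L) u a ->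
  la_ideal_gen (L:=L) u b -> la_ideal_gen (L:=L) u (a - b).
Proof. by move=> Ia Ib; rewrite -scaleN1r; apply/laig_add/laig_scale. Qed.

Lemma la_ideal_gen_ker (u v : V) : inW u -> la_ideal_gen (L:=L) u v ->
  inW v /\ forall eta, la_endo (L:=L) eta -> eta u = 0 -> eta v = 0.
Proof.
move=> Wu; elim=> {v} [|||c a _ [Wa ka]|w a Ww _ [Wa ka]].
- by split=> // eta _.
- by split=> // eta /la_endo_hom/la_hom_to0.
- move=> a b _ [Wa ka] _ [Wb kb]; split=> [|eta E eu]; first exact: inWD.
  by have [_ eD _ _] := E; rewrite /= eD // ka // kb //= addr0.
- split=> [|eta E eu]; first exact: inWZ.
  by have [_ _ eZ _] := E; rewrite /= eZ // ka //= scaler0.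
- split=> [|eta E eu]; first exact: inWbr.
  by have [_ _ _ eB] := E; rewrite /= eB // ka //= lie_brr0.
Qed.

Section SubstituteZero.
Variables (u : V) (h : V -> V).
Hypotheses (SW : forall s, S s -> inW s) (h_hom : la_hom_to (L:=L) br h).
Hypothesis hS : forall s, S s -> h s = if s == u then 0 else s.

Lemma la_subst0_endo : la_endo (L:=L) h.
Proof.
have [hD hZ hB] := h_hom; split=> // a /genW; elim=> {a} [s Ss||a b|c a|a b].
- by rewrite hS //; case: eqP => _; [exact: inW0 | exact: SW].
- by rewrite (la_hom_to0 h_hom).
- by move=> /genW Wa ha /genW Wb hb; rewrite /= hD //; exact: inWD.
- by move=> /genW Wa ha; rewrite /= hZ //; exact: inWZ.
- by move=> /genW Wa ha /genW Wb hb; rewrite /= hB //; exact: inWbr.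
Qed.

Lemma la_sub_subst0_ideal a : inW a -> la_ideal_gen (L:=L) u (a - h a).
Proof.
have [hD hZ hB] := h_hom; move=> /genW; elim=> {a} [s Ss||a b|c a|a b].
- rewrite hS //; case: eqP => [->|_]; last by rewrite subrr; exact: laig_zero.
  by rewrite subr0; exact: laig_gen.
- by rewrite (la_hom_to0 h_hom) subrr; exact: laig_zero.
- move=> /genW Wa Ia /genW Wb Ib; rewrite /= hD // opprD addrACA.
  exact: laig_add.
- by move=> /genW Wa Ia; rewrite /= hZ // -scalerBr; exact: laig_scale.
- move=> /genW Wa Ia /genW Wb Ib; rewrite /= hB //.
  have -> : br a b - br (h a) (h b) = br (h a) (b - h b) - br b (a - h a).
    rewrite !(lie_brBr br_lie) [br b a](lie_brC br_lie).
    rewrite [br b (h a)](lie_brC br_lie).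
    by rewrite opprB addrA opprK (addrAC _ (- _) (- _)) subrr add0r addrC.
  apply: la_ideal_genB; last exact: laig_br.
  by apply: laig_br => //; case: la_subst0_endo => /(_ a Wa).
Qed.

End SubstituteZero.

Lemma la_killing_kers_eq_ideal (u : V) (h : V -> V) :
    (forall s, S s -> inW s) -> S u -> la_hom_to (L:=L) br h ->
    (forall s, S s -> h s = if s == u then 0 else s) ->
  forall v, (inW v /\ forall eta, la_endo (L:=L) eta -> eta u = 0 -> eta v = 0)
            <-> la_ideal_gen (L:=L) u v.
Proof.
move=> SW Su h_hom hS v; split; last exact/la_ideal_gen_ker/SW.
move=> [Wv ker_v]; have hu : h u = 0 by rewrite hS // eqxx.
have := la_sub_subst0_ideal SW h_hom hS Wv.
by rewrite (ker_v h (la_subst0_endo SW h_hom hS) hu) subr0.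
Qed.

End LieSubalgebra.

Lemma ua_base_assoc_killing_kers (P : fieldType) (B : algType P)
    (inW : B -> Prop) (u : B) :
  (exists S, ua_base_assoc (W:=ua_sig_of inW) S /\ S u) ->
  forall v, (inW v /\ forall eta, ua_endo (W:=ua_sig_of inW) eta ->
                                  eta u = 0 -> eta v = 0)
            <-> ua_ideal_gen (W:=ua_sig_of inW) u v.
Proof.
move=> [S [[SW genW univ] Su]].
have [h [h_hom hS]] := univ B (fun s => if s == u then 0 else s).
exact: (ua_killing_kers_eq_ideal genW SW Su h_hom hS).
Qed.

Lemma ua_base_comm_killing_kers (P : fieldType) (B : comAlgType P)
    (inW : B -> Prop) (u : B) :
  (exists S, ua_base_comm (W:=ua_sig_of inW) S /\ S u) ->
  forall v, (inW v /\ forall eta, ua_endo (W:=ua_sig_of inW) eta ->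
                                  eta u = 0 -> eta v = 0)
            <-> ua_ideal_gen (W:=ua_sig_of inW) u v.
Proof.
move=> [S [[SW genW univ] Su]].
have [h [h_hom hS]] := univ B (fun s => if s == u then 0 else s).
exact: (ua_killing_kers_eq_ideal genW SW Su h_hom hS).
Qed.

Lemma la_base_killing_kers (P : fieldType) (V : lmodType P) (br : V -> V -> V)
    (inW : V -> Prop) (u : V) :
  is_lie_bracket br ->
  (exists S, la_base (L:=la_sig_of br inW) S /\ S u) ->
  forall v, (inW v /\ forall eta, la_endo (L:=la_sig_of br inW) eta ->
                                  eta u = 0 -> eta v = 0)
            <-> la_ideal_gen (L:=la_sig_of br inW) u v.
Proof.
move=> br_lie [S [[SW genW univ] Su]].
have [h [h_hom hS]] := univ V br br_lie (fun s => if s == u then 0 else s).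
exact: (la_killing_kers_eq_ideal br_lie genW SW Su h_hom hS).
Qed.

Theorem lemma3p1 (P : fieldType) (n : nat) :
  (* free commutative algebra *)
  (forall u : ua_car (free_comm_alg P n),
     (exists S, ua_base_comm S /\ S u) ->
     forall v, (ua_W (free_comm_alg P n) v /\
                forall eta, ua_endo eta -> eta u = ua_zero (free_comm_alg P n) ->
                            eta v = ua_zero (free_comm_alg P n))
               <-> ua_ideal_gen u v) /\
  (* free associative algebra *)
  (forall u : ua_car (free_assoc_alg P n),
     (exists S, ua_base_assoc S /\ S u) ->
     forall v, (ua_W (free_assoc_alg P n) v /\
                forall eta, ua_endo eta -> eta u = ua_zero (free_assoc_alg P n) ->
                            eta v = ua_zero (free_assoc_alg P n))
               <-> ua_ideal_gen u v) /\
  (* free Lie algebra *)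
  (forall u : la_car (free_lie_alg P n),
     (exists S, la_base S /\ S u) ->
     forall v, (la_W (free_lie_alg P n) v /\
                forall eta, la_endo eta -> eta u = la_zero (free_lie_alg P n) ->
                            eta v = la_zero (free_lie_alg P n))
               <-> la_ideal_gen u v).
Proof.
split; [|split].
- exact: ua_base_comm_killing_kers.
- exact: ua_base_assoc_killing_kers.
- by move=> u; apply: (la_base_killing_kers (@ncps_comm_lie P n)).
Qed.
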